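(* Let $N\ge3$ be an integer and consider the equation $$-w''+(N-2)w'+(N-1)w=\frac{1}{3}\binom{N-1}{2}w^3 .$$ Then: (D) the only $w\in C^2([0,\infty))$ solving it on $[0,\infty)$ with $w(0)=0$ and $\lim_{t\to\infty}w(t)=0$ is $w\equiv0$; (Nav) the only $w\in C^2([0,\infty))$ solving it on $[0,\infty)$ with $w'(0)-(N-1)w(0)=0$ and $\lim_{t\to\infty}w(t)=0$ is $w\equiv0$; (E) the only $w\in C^2(\mathbb{R})$ solving it on $\mathbb{R}$ with $\lim_{t\to\pm\infty}w(t)=0$ is $w\equiv0$.
   Context: These are the radial Dirichlet, Navier and entire problems for $\Delta^2u=-S_3[u]$ ($S_3$ the third elementary symmetric polynomial of the Hessian eigenvalues), i.e. $k=3$, $\lambda=0$, obtained via $v=u'$, $w(t)=-v(e^{-t})$. *)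

From Stdlib Require Import Reals.
From Coquelicot Require Import Coquelicot.
Open Scope R_scope.

Definition ode (N : nat) (w w1 w2 : R -> R) (t : R) : Prop :=
  - w2 t + (INR N - 2) * w1 t + (INR N - 1) * w t
  = / 3 * Binomial.C (N - 1) 2 * (w t) ^ 3.

(* w is C^2 on [0,+oo) with first derivative w1 and second derivative w2:
   classical derivatives on (0,+oo), and w, w1, w2 continuous on [0,+oo)
   (right-continuous at 0).  This is the usual meaning of C^2([0,oo)):
   derivatives extend continuously to the boundary point 0 (equivalently,
   one-sided derivatives exist there and are given by w1 0, w2 0). *)
Definition C2_halfline (w w1 w2 : R -> R) : Prop :=
  (forall t, 0 < t -> is_derive w t (w1 t) /\ is_derive w1 t (w2 t)
                      /\ continuous w2 t) /\
  filterlim w (at_right 0) (locally (w 0)) /\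
  filterlim w1 (at_right 0) (locally (w1 0)) /\
  filterlim w2 (at_right 0) (locally (w2 0)).

Definition C2_line (w w1 w2 : R -> R) : Prop :=
  forall t, is_derive w t (w1 t) /\ is_derive w1 t (w2 t) /\ continuous w2 t.

From Stdlib Require Import Reals Lra.
From Coquelicot Require Import Coquelicot.
Open Scope R_scope.

(* Write the equation as w'' = (N-2) w' - V'(w) with the double-well potential
   V(x) = c/4 x^4 - (N-1)/2 x^2.  The energy E = w'^2/2 + V(w) then satisfies
   E' = (N-2) w'^2 >= 0.  If E(t) > 0 at some t, monotonicity and w -> 0 keep
   |w'| bounded away from 0 near +oo, which contradicts w -> 0; so E <= 0.
   Conversely E >= 0: at t = 0 from the Dirichlet or Navier condition, or from
   w -> 0 at -oo on the line.  Hence E = 0, so E' = 0 forces w' = 0 and the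
   constant w equals its limit 0. *)


Lemma is_derive_MVT (f df : R -> R) (s t : R) : s < t ->
  (forall x, s <= x <= t -> is_derive f x (df x)) ->
  exists c, s < c < t /\ f t - f s = df c * (t - s).
Proof.
intros Hst Hd.
destruct (MVT_cor2 f df s t Hst) as [c [Heq Hc]].
- intros c Hc. apply is_derive_Reals, Hd, Hc.
- exists c. split; assumption.
Qed.

Lemma nondecreasing_of_derive_nonneg (f df : R -> R) (s t : R) :
  (forall x, s <= x <= t -> is_derive f x (df x) /\ 0 <= df x) ->
  s <= t -> f s <= f t.
Proof.
intros Hd Hst.
destruct (Rle_lt_or_eq_dec s t Hst) as [Hlt | <-]; [|lra].
destruct (is_derive_MVT f df s t Hlt) as [c [Hc Heq]].
- intros x Hx. apply Hd, Hx.
- assert (0 <= df c) by (apply Hd; lra). nra.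
Qed.

Lemma lim_of_derive_zero (f : R -> R) (T0 l : R) :
  (forall x, T0 < x -> is_derive f x 0) -> is_lim f p_infty l ->
  forall t, T0 < t -> f t = l.
Proof.
intros Hd Hl t Ht.
assert (Hconst : forall x, t < x -> f t = f x).
{ intros x Hx.
  destruct (is_derive_MVT f (fun _ => 0) t x Hx) as [c [_ Heq]].
  - intros y Hy. apply Hd. lra.
  - lra. }
assert (Hlt : is_lim f p_infty (f t)).
{ apply (is_lim_ext_loc (fun _ => f t)); [exists t; exact Hconst|apply is_lim_const]. }
apply is_lim_unique in Hl. apply is_lim_unique in Hlt.
rewrite Hl in Hlt. injection Hlt. auto.
Qed.

Lemma derive_away_from_0_not_is_lim (f df : R -> R) (M k l : R) : 0 < k ->
  (forall x, M < x -> is_derive f x (df x)) ->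
  (forall x, M < x -> k <= Rabs (df x)) -> ~ is_lim f p_infty l.
Proof.
intros Hk Hd Hdf Hl.
apply is_lim_spec in Hl. destruct (Hl (mkposreal 1 Rlt_0_1)) as [M' HM']. simpl in HM'.
set (T := Rmax M M' + 1). set (K := 3 / k).
assert (HTM : M < T) by (unfold T; pose proof (Rmax_l M M'); lra).
assert (HTM' : M' < T) by (unfold T; pose proof (Rmax_r M M'); lra).
assert (HK : k * K = 3) by (unfold K; field; lra).
assert (HK0 : 0 < K) by (unfold K; apply Rdiv_lt_0_compat; lra).
destruct (is_derive_MVT f df T (T + K)) as [c [Hc Heq]]; [lra| |].
- intros x Hx. apply Hd. lra.
- assert (Hjump : 3 <= Rabs (f (T + K) - f T)).
  { rewrite Heq, Rabs_mult, (Rabs_right (T + K - T)) by lra.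
    rewrite <- HK. replace (T + K - T) with K by ring.
    apply Rmult_le_compat_r; [lra|apply Hdf; lra]. }
  assert (Hend : Rabs (f (T + K) - l) < 1) by (apply HM'; lra).
  assert (Hstart : Rabs (l - f T) < 1)
    by (rewrite <- Rabs_Ropp, Ropp_minus_distr; apply HM', HTM').
  pose proof (Rabs_triang (f (T + K) - l) (l - f T)) as Htri.
  replace (f (T + K) - l + (l - f T)) with (f (T + K) - f T) in Htri by ring.
  lra.
Qed.

Section Energy.

Variables (a : R) (V dV : R -> R).
Hypothesis V_derive : forall x, is_derive V x (dV x).
Hypothesis a_pos : 0 < a.
Hypothesis V_0 : V 0 = 0.

Definition energy (w w1 : R -> R) (t : R) : R := w1 t ^ 2 / 2 + V (w t).

Definition solution_on (w w1 w2 : R -> R) (T0 : R) : Prop :=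
  forall t, T0 < t ->
    is_derive w t (w1 t) /\ is_derive w1 t (w2 t) /\ w2 t = a * w1 t - dV (w t).

Lemma potential_is_lim_0 (w : R -> R) (x : Rbar) :
  is_lim w x 0 -> is_lim (fun s => V (w s)) x 0.
Proof.
intros Hl. rewrite <- V_0. apply is_lim_comp_continuous; [exact Hl|].
apply (ex_derive_continuous (V:=R_NormedModule)). eexists. apply V_derive.
Qed.

Section Solution.

Variables (w w1 w2 : R -> R) (T0 : R).
Hypothesis Hsol : solution_on w w1 w2 T0.

Lemma energy_derive t : T0 < t -> is_derive (energy w w1) t (a * w1 t ^ 2).
Proof.
intros Ht. destruct (Hsol t Ht) as (Hw & Hw1 & Heq).
replace (a * w1 t ^ 2) with (plus (scal (w2 t) (w1 t)) (scal (w1 t) (dV (w t)))).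
- apply (is_derive_plus (fun s => (fun y => y ^ 2 / 2) (w1 s)) (fun s => V (w s))).
  + apply (is_derive_comp (fun y => y ^ 2 / 2)); [|exact Hw1].
    auto_derive; [exact I|field].
  + apply (is_derive_comp V w); [apply V_derive|exact Hw].
- rewrite Heq. unfold plus, scal; simpl. unfold mult; simpl. ring.
Qed.

Lemma energy_nondecreasing s t : T0 < s -> s <= t -> energy w w1 s <= energy w w1 t.
Proof.
intros Hs Hst.
apply (nondecreasing_of_derive_nonneg _ (fun x => a * w1 x ^ 2)); [|exact Hst].
intros x Hx. split.
- apply energy_derive. lra.
- apply Rmult_le_pos; [lra|apply pow2_ge_0].
Qed.

Lemma energy_nonpos : is_lim w p_infty 0 -> forall t, T0 < t -> energy w w1 t <= 0.
Proof.
intros Hl t Ht. destruct (Rle_dec (energy w w1 t) 0) as [|Hpos]; [assumption|exfalso].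
set (d := energy w w1 t). assert (Hd : 0 < d) by (unfold d; lra).
pose proof (potential_is_lim_0 w p_infty Hl) as HV.
apply is_lim_spec in HV. destruct (HV (mkposreal (d / 2) ltac:(lra))) as [M HM]. simpl in HM.
set (k := Rmin 1 d).
assert (Hk : 0 < k) by (apply Rmin_glb_lt; lra).
apply (derive_away_from_0_not_is_lim w w1 (Rmax t M) k 0 Hk).
- intros x Hx. apply Hsol. pose proof (Rmax_l t M). lra.
- intros x Hx.
  assert (Htx : t < x) by (pose proof (Rmax_l t M); lra).
  assert (HMx : M < x) by (pose proof (Rmax_r t M); lra).
  assert (Hmono : d <= energy w w1 x) by (apply energy_nondecreasing; lra).
  assert (HVx : V (w x) < d / 2).
  { specialize (HM x HMx). rewrite Rminus_0_r in HM. apply Rabs_def2 in HM. lra. }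
  assert (Hsq : d < Rabs (w1 x) ^ 2) by (unfold energy in Hmono; rewrite pow2_abs; lra).
  assert (Hk1 : k <= 1) by apply Rmin_l. assert (Hkd : k <= d) by apply Rmin_r.
  pose proof (Rabs_pos (w1 x)) as Habs. nra.
- exact Hl.
Qed.

Lemma solution_zero_of_energy_nonneg : is_lim w p_infty 0 ->
  (forall t, T0 < t -> 0 <= energy w w1 t) -> forall t, T0 < t -> w t = 0.
Proof.
intros Hl HE.
assert (Hw1 : forall t, T0 < t -> w1 t = 0).
{ intros t Ht.
  assert (Hzero : is_derive (energy w w1) t 0).
  { apply (is_derive_ext_loc (fun _ => 0)); [|apply (is_derive_const 0)].
    apply (filter_imp (fun u => T0 < u)); [|exact (open_gt T0 t Ht)].
    intros u Hu. apply Rle_antisym; [apply HE, Hu|apply energy_nonpos; assumption]. }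
  apply is_derive_unique in Hzero.
  rewrite (is_derive_unique _ _ _ (energy_derive t Ht)) in Hzero.
  apply Rmult_integral in Hzero. destruct Hzero as [|Hsq]; [lra|nra]. }
apply (lim_of_derive_zero w T0 0); [|exact Hl].
intros x Hx. rewrite <- (Hw1 x Hx). apply Hsol, Hx.
Qed.

End Solution.

Lemma energy_nonneg_of_lim_minfty w w1 w2 :
  (forall T0, solution_on w w1 w2 T0) -> is_lim w m_infty 0 ->
  forall t, 0 <= energy w w1 t.
Proof.
intros Hsol Hl t. destruct (Rle_dec 0 (energy w w1 t)) as [|Hneg]; [assumption|exfalso].
pose proof (potential_is_lim_0 w m_infty Hl) as HV.
apply is_lim_spec in HV.
destruct (HV (mkposreal (- energy w w1 t) ltac:(lra))) as [M HM]. simpl in HM.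
set (s := Rmin M t - 1).
assert (HsM : s < M) by (unfold s; pose proof (Rmin_l M t); lra).
assert (Hst : s <= t) by (unfold s; pose proof (Rmin_r M t); lra).
assert (Hmono : energy w w1 s <= energy w w1 t)
  by (apply (energy_nondecreasing w w1 w2 (s - 1)); [apply Hsol|lra|exact Hst]).
specialize (HM s HsM). rewrite Rminus_0_r in HM. apply Rabs_def2 in HM.
assert (HVs : V (w s) <= energy w w1 s) by (unfold energy; pose proof (pow2_ge_0 (w1 s)); lra).
lra.
Qed.

Lemma energy_right_continuous w w1 :
  filterlim w (at_right 0) (locally (w 0)) ->
  filterlim w1 (at_right 0) (locally (w1 0)) ->
  filterlim (energy w w1) (at_right 0) (locally (energy w w1 0)).
Proof.
intros Hw Hw1. unfold energy.
eapply (filterlim_comp_2 (fun s => w1 s ^ 2 / 2) (fun s => V (w s)) Rplus).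
- apply (filterlim_comp _ _ _ w1 (fun y => y ^ 2 / 2) _ _ _ Hw1).
  apply (ex_derive_continuous (V:=R_NormedModule) (fun y => y ^ 2 / 2)). auto_derive. exact I.
- apply (filterlim_comp _ _ _ w V _ _ _ Hw).
  apply (ex_derive_continuous (V:=R_NormedModule)). eexists. apply V_derive.
- apply (filterlim_plus (V:=R_NormedModule)).
Qed.

Lemma solution_zero_halfline w w1 w2 :
  solution_on w w1 w2 0 ->
  filterlim w (at_right 0) (locally (w 0)) ->
  filterlim w1 (at_right 0) (locally (w1 0)) ->
  0 <= energy w w1 0 -> is_lim w p_infty 0 -> forall t, 0 <= t -> w t = 0.
Proof.
intros Hsol Hw Hw1 HE0 Hl.
assert (Hpos : forall t, 0 < t -> w t = 0).
{ apply (solution_zero_of_energy_nonneg w w1 w2 0 Hsol Hl).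
  intros t Ht. apply (Rle_trans _ _ _ HE0).
  change (Rbar_le (energy w w1 0) (energy w w1 t)).
  apply (filterlim_le (F := at_right 0) (energy w w1) (fun _ => energy w w1 t)).
  - unfold at_right, within. apply (filter_imp (fun u => u < t)); [|exact (open_lt t 0 Ht)].
    intros u Hu Hu0. apply (energy_nondecreasing w w1 w2 0); [exact Hsol|exact Hu0|lra].
  - apply (energy_right_continuous w w1 Hw Hw1).
  - apply filterlim_const. }
intros t Ht. destruct (Rle_lt_or_eq_dec 0 t Ht) as [Hlt | <-]; [apply Hpos, Hlt|].
apply (filterlim_locally_unique (F := at_right 0) w); [exact Hw|].
apply (filterlim_ext_loc (fun _ => 0)); [|apply filterlim_const].
exists (mkposreal 1 Rlt_0_1). intros u _ Hu. symmetry. apply Hpos, Hu.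
Qed.

Lemma solution_zero_line w w1 w2 :
  (forall T0, solution_on w w1 w2 T0) -> is_lim w p_infty 0 -> is_lim w m_infty 0 ->
  forall t, w t = 0.
Proof.
intros Hsol Hp Hm t.
apply (solution_zero_of_energy_nonneg w w1 w2 (t - 1) (Hsol _) Hp); [|lra].
intros s _. apply (energy_nonneg_of_lim_minfty w w1 w2 Hsol Hm).
Qed.

End Energy.

Definition quartic_potential (k c x : R) : R := c / 4 * x ^ 4 - k / 2 * x ^ 2.

Definition quartic_potential_deriv (k c x : R) : R := c * x ^ 3 - k * x.

Lemma quartic_potential_derive k c x :
  is_derive (quartic_potential k c) x (quartic_potential_deriv k c x).
Proof. unfold quartic_potential, quartic_potential_deriv. auto_derive; [exact I|field]. Qed.

Lemma quartic_potential_0 k c : quartic_potential k c 0 = 0.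
Proof. unfold quartic_potential. ring. Qed.

Lemma quartic_navier_energy_nonneg k c x : 1 <= k -> 0 <= c ->
  0 <= (k * x) ^ 2 / 2 + quartic_potential k c x.
Proof.
intros Hk Hc. unfold quartic_potential.
replace ((k * x) ^ 2 / 2 + (c / 4 * x ^ 4 - k / 2 * x ^ 2))
  with (k * (k - 1) / 2 * x ^ 2 + c / 4 * (x ^ 2) ^ 2) by field.
assert (0 <= k * (k - 1)) by (apply Rmult_le_pos; lra).
apply Rplus_le_le_0_compat; apply Rmult_le_pos; try apply pow2_ge_0; lra.
Qed.

Definition cubic_coef (N : nat) : R := / 3 * Binomial.C (N - 1) 2.

Lemma cubic_coef_nonneg N : 0 <= cubic_coef N.
Proof.
unfold cubic_coef, Binomial.C. apply Rmult_le_pos; [lra|].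
apply Rmult_le_pos; [apply pos_INR|].
apply Rlt_le, Rinv_0_lt_compat, Rmult_lt_0_compat; apply INR_fact_lt_0.
Qed.

Lemma ode_solution_on N w w1 w2 T0 :
  (forall t, T0 < t -> is_derive w t (w1 t) /\ is_derive w1 t (w2 t)) ->
  (forall t, T0 < t -> ode N w w1 w2 t) ->
  solution_on (INR N - 2) (quartic_potential_deriv (INR N - 1) (cubic_coef N)) w w1 w2 T0.
Proof.
intros Hd Hode t Ht. destruct (Hd t Ht) as [Hw Hw1].
split; [exact Hw|split; [exact Hw1|]].
specialize (Hode t Ht). unfold ode in Hode. fold (cubic_coef N) in Hode.
unfold quartic_potential_deriv. lra.
Qed.

Theorem theorem5p1 (N : nat) (HN : (3 <= N)%nat) :
  (* (D) Dirichlet problem on [0,oo) *)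
  (forall w w1 w2 : R -> R,
     C2_halfline w w1 w2 ->
     (forall t, 0 <= t -> ode N w w1 w2 t) ->
     w 0 = 0 ->
     is_lim w p_infty 0 ->
     forall t, 0 <= t -> w t = 0) /\
  (* (Nav) Navier problem on [0,oo) *)
  (forall w w1 w2 : R -> R,
     C2_halfline w w1 w2 ->
     (forall t, 0 <= t -> ode N w w1 w2 t) ->
     w1 0 - (INR N - 1) * w 0 = 0 ->
     is_lim w p_infty 0 ->
     forall t, 0 <= t -> w t = 0) /\
  (* (E) entire problem on R *)
  (forall w w1 w2 : R -> R,
     C2_line w w1 w2 ->
     (forall t, ode N w w1 w2 t) ->
     is_lim w p_infty 0 ->
     is_lim w m_infty 0 ->
     forall t, w t = 0).
Proof.
assert (HN3 : 3 <= INR N) by (apply le_INR in HN; simpl in HN; lra).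
assert (Ha : 0 < INR N - 2) by lra.
pose proof (quartic_potential_derive (INR N - 1) (cubic_coef N)) as HV.
pose proof (quartic_potential_0 (INR N - 1) (cubic_coef N)) as HV0.
assert (Hhalf : forall w w1 w2,
          (forall t, 0 < t -> is_derive w t (w1 t) /\ is_derive w1 t (w2 t) /\ continuous w2 t) ->
          (forall t, 0 <= t -> ode N w w1 w2 t) ->
          solution_on (INR N - 2) (quartic_potential_deriv (INR N - 1) (cubic_coef N)) w w1 w2 0).
{ intros w w1 w2 Hd Hode. apply ode_solution_on.
  - intros t Ht. destruct (Hd t Ht) as (Hw & Hw1 & _). split; assumption.
  - intros t Ht. apply Hode. lra. }
split; [|split].
- intros w w1 w2 [Hd [Hr0 [Hr1 _]]] Hode Hw0 Hl.
  apply (solution_zero_halfline _ _ _ HV Ha HV0 w w1 w2 (Hhalf w w1 w2 Hd Hode) Hr0 Hr1); [|exact Hl].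
  unfold energy. rewrite Hw0, HV0. pose proof (pow2_ge_0 (w1 0)). lra.
- intros w w1 w2 [Hd [Hr0 [Hr1 _]]] Hode Hnav Hl.
  apply (solution_zero_halfline _ _ _ HV Ha HV0 w w1 w2 (Hhalf w w1 w2 Hd Hode) Hr0 Hr1); [|exact Hl].
  unfold energy. replace (w1 0) with ((INR N - 1) * w 0) by lra.
  apply quartic_navier_energy_nonneg; [lra|apply cubic_coef_nonneg].
- intros w w1 w2 HC Hode Hp Hm.
  apply (solution_zero_line _ _ _ HV Ha HV0 w w1 w2); [|exact Hp|exact Hm].
  intros T0. apply ode_solution_on; [|intros t _; apply Hode].
  intros t _. destruct (HC t) as (Hw & Hw1 & _). split; assumption.
Qed.
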